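(* Let $K$ be a compact line, let $T:K\to\mathbb{R}$ be a nondecreasing right-continuous function, and let $h:K\to\mathbb{R}$ be $T$-integrable. Define $H(x)=\int_{0_K}^x h\,dT$ for $x\in K$. If $f:K\to\mathbb{R}$ is bounded, then $f$ is $H$-integrable if and only if $fh$ is $T$-integrable, and in this case $\int_K f\,dH=\int_K fh\,dT$.
   Context: A compact line is a compact space $K$ whose topology is the order topology of a linear order on $K$; $0_K$ and $1_K$ denote its minimum and maximum, and $0_K<1_K$. A tagged partition of $K$ is a finite family $P=\{([x_{i-1},x_i],t_i):i=1,\dots,n\}$ with $0_K=x_0\le\cdots\le x_n=1_K$ and $t_i\in[x_{i-1},x_i]$. A gauge assigns to each $x\in K$ an open interval $\delta(x)\ni x$; $P$ is $\delta$-fine if $[x_{i-1},x_i]\subset\delta(t_i)$ for all $i$. With $S(f,G,P)=f(0_K)G(0_K)+\sum_{i=1}^n f(t_i)(G(x_i)-G(x_{i-1}))$, $f$ is $G$-integrable if there is $A\in\mathbb{R}$ such that for every $\varepsilon>0$ some gauge $\delta$ gives $|S(f,G,P)-A|<\varepsilon$ for all $\delta$-fine $P$; $\int_K f\,dG=A$. For $x\in K$, $\int_{0_K}^x h\,dT$ denotes the integral, in this sense, of $h|_{[0_K,x]}$ with respect to $T|_{[0_K,x]}$ on the compact line $[0_K,x]$ (which exists whenever $h$ is $T$-integrable on $K$). *)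

From HB Require Import structures.
From mathcomp Require Import all_boot all_order all_algebra.
From mathcomp Require Import all_classical all_reals.
From mathcomp Require Import topology normedtype.
Set Implicit Arguments. Unset Strict Implicit. Unset Printing Implicit Defensive.
Import Order.TTheory GRing.Theory Num.Theory.
Import numFieldTopology.Exports numFieldNormedType.Exports.
Local Open Scope classical_set_scope.
Local Open Scope ring_scope.

Section Gauge.
Context {d : Order.disp_t} {K : orderTopologicalType d} {R : realType}.

Definition gauge (delta : K -> interval K) : Prop :=
  forall x : K, itv_open_ends (delta x) /\ x \in delta x.

Definition tagged_partition (a b : K) (n : nat) (x t : nat -> K) : Prop :=
  x 0%N = a /\ x n = b /\
  (forall i : nat, (0 < i <= n)%N ->
     (x i.-1 <= x i)%O /\ (x i.-1 <= t i)%O /\ (t i <= x i)%O).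

Definition fine (delta : K -> interval K) (n : nat) (x t : nat -> K) : Prop :=
  forall i : nat, (0 < i <= n)%N ->
    forall y : K, (x i.-1 <= y)%O -> (y <= x i)%O -> y \in delta (t i).

Definition riemann_sum (a : K) (f G : K -> R) (n : nat) (x t : nat -> K) : R :=
  f a * G a + \sum_(1 <= i < n.+1) f (t i) * (G (x i) - G (x i.-1)).

Definition is_integral_on (a b : K) (f G : K -> R) (A : R) : Prop :=
  forall eps : R, 0 < eps ->
    exists delta : K -> interval K, gauge delta /\
      forall (n : nat) (x t : nat -> K),
        tagged_partition a b n x t -> fine delta n x t ->
        `|riemann_sum a f G n x t - A| < eps.

Definition integrable_on (a b : K) (f G : K -> R) : Prop :=
  exists A : R, is_integral_on a b f G A.

(* the integral (a value A as above; 0 if none exists) *)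
Definition integral_on (a b : K) (f G : K -> R) : R :=
  xget 0 [set A | is_integral_on a b f G A].

End Gauge.

(* The key is the Saks-Henstock lemma.  For a gauge fine enough for the
   integral H(1_K) of h, every fine tagged partition has defects
   D_i = h(t_i) (T x_i - T x_{i-1}) - (H x_i - H x_{i-1}) with small total
   variation sum_i |D_i|: the intervals outside any set of indices can be
   refined so that their sums reproduce the increments of H, and the result is
   still a fine partition of K.  Since S(fh, T, P) - S(f, H, P) = sum_i f(t_i) D_i
   and f is bounded, the two families of Riemann sums are uniformly close, hence
   have the same limits.
   All this needs Cousin's lemma (every gauge admits a fine partition), which a
   supremum argument gives in a compact line without gaps.  If K has a gap u < v,
   the gauge separating ]-oo, u] from [v, +oo[ has no fine partition, so every
   number is an integral of every function and both sides hold trivially. *)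

From Pilot Require Import Defs.
From HB Require Import structures.
From mathcomp Require Import all_boot all_order all_algebra.
From mathcomp Require Import all_classical all_reals.
From mathcomp Require Import topology normedtype.
From mathcomp Require Import zify lra.
Import Order.TTheory GRing.Theory Num.Theory.
Import numFieldTopology.Exports numFieldNormedType.Exports.
Local Open Scope classical_set_scope.
Local Open Scope ring_scope.
Set Implicit Arguments. Unset Strict Implicit. Unset Printing Implicit Defensive.

Section Partitions.
Context {d : Order.disp_t} {K : orderTopologicalType d}.
Implicit Types (g : K -> interval K) (a b p q s : K) (x y t u : nat -> K).

Lemma gaugeI g1 g2 : gauge g1 -> gauge g2 -> gauge (fun w => (g1 w `&` g2 w)%O).
Proof.
move=> gg1 gg2 w; have [o1 w1] := gg1 w; have [o2 w2] := gg2 w.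
by rewrite itv_open_endsI // in_itvI w1 w2.
Qed.

Lemma fineI g1 g2 n x t : Defs.fine (fun w => (g1 w `&` g2 w)%O) n x t ->
  Defs.fine g1 n x t /\ Defs.fine g2 n x t.
Proof.
by move=> fx; split=> i ni w w1 w2; have := fx i ni w w1 w2; rewrite in_itvI => /andP[].
Qed.

Lemma tagged_partition_nil a : tagged_partition a a 0 (fun=> a) (fun=> a).
Proof. by split=> //; split=> // i /andP[i0 i1]; lia. Qed.

Lemma fine_nil g x t : Defs.fine g 0 x t.
Proof. by move=> i /andP[i0 i1]; lia. Qed.

Definition single p q : nat -> K := fun i => if i is 0%N then p else q.

Lemma tagged_partition_single p q s : (p <= s)%O -> (s <= q)%O ->
  tagged_partition p q 1 (single p q) (fun=> s).
Proof.
move=> ps sq; split=> //; split=> // i /andP[i0 i1].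
have -> : i = 1%N by lia.
by split=> //; exact: le_trans sq.
Qed.

Lemma fine_single g p q s :
  (forall w, (p <= w)%O -> (w <= q)%O -> w \in g s) ->
  Defs.fine g 1 (single p q) (fun=> s).
Proof. by move=> pq i /andP[i0 i1]; have -> : i = 1%N; [lia | exact: pq]. Qed.

Definition concat_at n x y : nat -> K :=
  fun i => if (i <= n)%N then x i else y (i - n)%N.

Lemma concat_at_le n x y i : (i <= n)%N -> concat_at n x y i = x i.
Proof. by rewrite /concat_at => ->. Qed.

Lemma concat_at_gt n x y i : (n < i)%N -> concat_at n x y i = y (i - n)%N.
Proof. by rewrite /concat_at; case: ifP => // ? ?; lia. Qed.

Lemma concat_at_pred n x y i : x n = y 0%N -> (n < i)%N ->
  concat_at n x y i.-1 = y (i - n).-1%N.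
Proof.
move=> xy ni; have [le|gt] := leqP i.-1 n.
  have -> : i.-1 = n by lia.
  by have -> : (i - n).-1 = 0%N; [lia | rewrite concat_at_le].
by rewrite concat_at_gt //; congr y; lia.
Qed.

Lemma tagged_partition_cat a b c n m x t y u :
  tagged_partition a c n x t -> tagged_partition c b m y u ->
  tagged_partition a b (n + m) (concat_at n x y) (concat_at n t u).
Proof.
move=> [x0 [xn hx]] [y0 [ym hy]]; split; first by rewrite concat_at_le.
split.
  have [m0|m0] := eqVneq m 0%N.
    by rewrite m0 addn0 concat_at_le // xn -y0 -ym m0.
  by rewrite concat_at_gt ?addKn //; lia.
move=> i /andP[i0 im]; have [le|gt] := leqP i n.
  by rewrite !concat_at_le //; [apply: hx; rewrite i0 | lia].
by rewrite concat_at_pred ?xn -?y0 // !concat_at_gt //; apply: hy; lia.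
Qed.

Lemma fine_cat g n m x t y u : x n = y 0%N ->
  Defs.fine g n x t -> Defs.fine g m y u ->
  Defs.fine g (n + m) (concat_at n x y) (concat_at n t u).
Proof.
move=> xy fx fy i /andP[i0 im]; have [le|gt] := leqP i n.
  by rewrite !concat_at_le //; [apply: fx; rewrite i0 | lia].
by rewrite concat_at_pred // !concat_at_gt //; apply: fy; lia.
Qed.

Definition fine_partitioned g a b : Prop :=
  exists n x t, tagged_partition a b n x t /\ Defs.fine g n x t.

Definition cousin_on a b : Prop := forall g, gauge g -> fine_partitioned g a b.

Lemma fine_partitioned_refl g a : fine_partitioned g a a.
Proof.
exists 0%N, (fun=> a), (fun=> a).
by split; [exact: tagged_partition_nil | exact: fine_nil].
Qed.

Lemma fine_partitioned_snoc g a p s q : fine_partitioned g a p ->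
  (p <= s)%O -> (s <= q)%O ->
  (forall w, (p <= w)%O -> (w <= q)%O -> w \in g s) -> fine_partitioned g a q.
Proof.
move=> [n [x [t [tp fx]]]] ps sq pqs.
have xn : x n = single p q 0%N by case: tp => _ [].
exists (n + 1)%N, (concat_at n x (single p q)), (concat_at n t (fun=> s)).
split; first exact: tagged_partition_cat tp (tagged_partition_single ps sq).
by apply: fine_cat => //; exact: fine_single.
Qed.

End Partitions.

Section Cousin.
Context {d : Order.disp_t} {K : orderTopologicalType d}.
Implicit Types (g : K -> interval K) (a b s : K) (x t : nat -> K).

Lemma compact_supremums (S : set K) : compact [set: K] ->
  S !=set0 -> has_ubound S -> supremums S !=set0.
Proof.
move=> hc [s0 Ss0] [u0 ub0].
pose D := [set su : K * K | S su.1 /\ ubound S su.2].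
pose B (su : K * K) := [set z : K | (su.1 <= z <= su.2)%O].
have FF : Filter (filter_from D B).
  apply: filter_from_filter; first by exists (s0, u0).
  move=> [s u] [s' u'] [/= Ss ubu] [/= Ss' ubu'].
  exists (Order.max s s', Order.min u u').
    split=> /=; first by rewrite maxEle; case: ifP.
    by move=> y Sy; rewrite le_min ubu ?ubu'.
  by move=> z /andP[]; rewrite /B /= ge_max le_min => /andP[-> ->] /andP[-> ->].
have PF : ProperFilter (filter_from D B).
  apply: filter_from_proper => -[s u] [/= Ss ubu]; exists s.
  by rewrite /B /= lexx ubu.
have [p [_ clp]] := hc _ PF filterT.
have BF su : D su -> filter_from D B (B su) by exists su.
exists p; split.
  move=> y Sy; rewrite leNgt; apply/negP => py.
  have py' : nbhs p `]-oo, y[%classic.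
    by apply: open_nbhs_nbhs; split; [exact: lray_open|].
  have [z [/andP[/= yz _] /= zy]] := clp _ _ (BF (y, u0) (conj Sy ub0)) py'.
  by move: zy; rewrite in_itv /= ltNge yz.
move=> u ubu; rewrite leNgt; apply/negP => up.
have up' : nbhs p `]u, +oo[%classic.
  by apply: open_nbhs_nbhs; split; [exact: rray_open | rewrite /= in_itv /= up].
have [z [/andP[/= _ zu] /= uz]] := clp _ _ (BF (s0, u) (conj Ss0 ubu)) up'.
by move: uz; rewrite in_itv /= andbT ltNge zu.
Qed.

Lemma itv_open_ends_left (i : interval K) s : itv_open_ends i -> s \in i ->
  (exists2 v, (v < s)%O & forall w, (v < w <= s)%O -> w \in i) \/
  (forall w, (w <= s)%O -> w \in i).
Proof.
case: i => [[[]v|[]] [[]v'|[]]] //= _; rewrite !in_itv /= ?andbT.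
- by move=> /andP[vs sv']; left; exists v => // w /andP[vw ws];
    rewrite in_itv /= vw (le_lt_trans ws sv').
- by move=> vs; left; exists v => // w /andP[vw _]; rewrite in_itv /= vw.
- by move=> sv'; right => w ws; rewrite in_itv /= (le_lt_trans ws sv').
- by right => w; rewrite in_itv.
Qed.

Lemma itv_open_ends_right (i : interval K) s : itv_open_ends i -> s \in i ->
  (exists2 v, (s < v)%O & forall w, (s <= w < v)%O -> w \in i) \/
  (forall w, (s <= w)%O -> w \in i).
Proof.
case: i => [[[]v|[]] [[]v'|[]]] //= _; rewrite !in_itv /= ?andbT.
- by move=> /andP[vs sv']; left; exists v' => // w /andP[sw wv'];
    rewrite in_itv /= wv' (lt_le_trans vs sw).
- by move=> vs; right => w sw; rewrite in_itv /= andbT (lt_le_trans vs sw).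
- by move=> sv'; left; exists v' => // w /andP[_ wv']; rewrite in_itv /= wv'.
- by right => w; rewrite in_itv.
Qed.

Lemma dense_compact_cousin : compact [set: K] ->
  (forall u v : K, (u < v)%O -> exists w, (u < w < v)%O) ->
  forall a b, (a <= b)%O -> cousin_on a b.
Proof.
move=> hc dense a b ab g gg.
(* s := sup G: fine partitions of [a, y] for y in g s, y <= s, extend across s
   by ([y, z], s); density then forces s = b. *)
pose G := [set y | (a <= y <= b)%O /\ fine_partitioned g a y].
have Ga : G a by split; [rewrite lexx ab | exact: fine_partitioned_refl].
have ubG : ubound G b by move=> y [/andP[]].
have [s [ubs lubs]] := compact_supremums hc (ex_intro _ a Ga) (ex_intro _ b ubG).
have sb : (s <= b)%O := lubs _ ubG.
have [gs si] := gg s.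
have [y [Gy ys ysi]] : exists y, [/\ G y, (y <= s)%O &
    forall w, (y <= w <= s)%O -> w \in g s].
  case: (itv_open_ends_left gs si) => [[v vs hv]|hl]; last first.
    by exists a; split=> // [|w /andP[_]]; [exact: ubs|exact: hl].
  have [y Gy vy] : exists2 y, G y & (v < y)%O.
    apply: contrapT => noy; suff : (s <= v)%O by rewrite leNgt vs.
    by apply: lubs => y Gy; rewrite leNgt; apply/negP => vy; apply: noy; exists y.
  exists y; split=> // [|w /andP[yw ws]]; first exact: ubs.
  by apply: hv; rewrite (lt_le_trans vy yw).
have extend z : (s <= z <= b)%O -> (forall w, (s <= w <= z)%O -> w \in g s) -> G z.
  move=> /andP[sz zb] zsi; have [/andP[ay _] Py] := Gy.
  split; first by rewrite (le_trans ay (le_trans ys sz)) zb.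
  apply: fine_partitioned_snoc Py ys sz _ => w yw wz.
  case: (leP w s) => [ws|/ltW sw]; [apply: ysi | apply: zsi].
    by rewrite yw ws.
  by rewrite sw wz.
have sbE : s = b.
  apply/eqP; rewrite eq_le sb leNgt; apply/negP => s_lt_b.
  have [z [sz zb zsi]] : exists z, [/\ (s < z)%O, (z <= b)%O &
      forall w, (s <= w <= z)%O -> w \in g s].
    case: (itv_open_ends_right gs si) => [[v sv hv]|hr]; last first.
      by exists b; split=> // w /andP[sw _]; exact: hr.
    have [bv|vb] := ltP b v.
      exists b; split=> // w /andP[sw wb].
      by apply: hv; rewrite sw (le_lt_trans wb bv).
    have [z /andP[sz zv]] := dense _ _ sv.
    exists z; split=> //; first exact: ltW (lt_le_trans zv vb).
    by move=> w /andP[sw wz]; apply: hv; rewrite sw (le_lt_trans wz zv).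
  have szb : (s <= z <= b)%O by rewrite (ltW sz) zb.
  by have := ubs _ (extend z szb zsi); rewrite leNgt sz.
have sbb : (s <= b <= b)%O by rewrite sb lexx.
suff [_ //] : G b.
by apply: (extend b sbb) => w; rewrite -sbE -eq_le => /eqP <-.
Qed.

Lemma exists_crossing n x (c : K) : (x 0%N <= c)%O -> (c < x n)%O ->
  exists2 i, (0 < i <= n)%N & (x i.-1 <= c < x i)%O.
Proof.
move=> x0c; elim: n => [|n IH] cxn; first by move: cxn; rewrite ltNge x0c.
have [cx|xc] := ltP c (x n); last by exists n.+1; rewrite ?leqnn //= xc cxn.
by have [i /andP[i0 iN] hi] := IH cx; exists i; rewrite ?i0 ?(leqW iN).
Qed.

Lemma gap_not_cousin a b u v : (a <= u)%O -> (v <= b)%O -> (u < v)%O ->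
  (forall w, ~ (u < w < v)%O) -> ~ cousin_on a b.
Proof.
move=> au vb uv gap cab.
pose g w := if (w <= u)%O then `]-oo, v[%O else `]u, +oo[%O.
have gg : gauge g.
  move=> w; rewrite /g; case: ifP => wu; split=> //; rewrite in_itv /= ?andbT.
    exact: le_lt_trans wu uv.
  by rewrite ltNge wu.
have [n [x [t [[x0 [xn _]] fx]]]] := cab g gg.
(* the interval crossing the gap contains u and v, while no g w contains both *)
have x0u : (x 0%N <= u)%O by rewrite x0.
have uxn : (u < x n)%O by rewrite xn (lt_le_trans uv vb).
have [i ni /andP[xu ux]] := exists_crossing x0u uxn.
have vx : (v <= x i)%O.
  by rewrite leNgt; apply/negP => xv; apply: (gap (x i)); rewrite ux.
have := fx i ni u xu (ltW ux); have := fx i ni v (ltW (le_lt_trans xu uv)) vx.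
by rewrite /g; case: ifP => _; rewrite !in_itv /= ?ltxx ?andbT // => _; rewrite ltxx.
Qed.

End Cousin.

Section RiemannSums.
Context {d : Order.disp_t} {K : orderTopologicalType d} {R : realType}.
Implicit Types (g : K -> interval K) (a b p q s : K) (x y t u : nat -> K)
  (f G : K -> R).

Definition increment_sum f G n x t : R :=
  \sum_(1 <= i < n.+1) f (t i) * (G (x i) - G (x i.-1)).

Lemma riemann_sumE a f G n x t :
  riemann_sum a f G n x t = f a * G a + increment_sum f G n x t.
Proof. by []. Qed.

Lemma increment_sum_nil f G x t : increment_sum f G 0 x t = 0.
Proof. by rewrite /increment_sum big_geq. Qed.

Lemma increment_sum_single f G p q s :
  increment_sum f G 1 (single p q) (fun=> s) = f s * (G q - G p).
Proof. by rewrite /increment_sum big_nat1. Qed.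

Lemma increment_sum_cat f G n m x t y u : x n = y 0%N ->
  increment_sum f G (n + m) (concat_at n x y) (concat_at n t u) =
  increment_sum f G n x t + increment_sum f G m y u.
Proof.
move=> xy; rewrite /increment_sum (@big_cat_nat _ _ _ n.+1) //=; last by lia.
congr (_ + _).
  by apply: eq_big_nat => i /andP[_ iN]; rewrite !concat_at_le //; lia.
have -> : ((n + m).+1 = m + n.+1)%N by lia.
rewrite -{1}[n.+1]add0n big_addn addnK big_add1 /=.
apply: eq_big_nat => i _; rewrite concat_at_pred ?concat_at_gt //; try lia.
by have -> : (i + n.+1 - n = i.+1)%N by lia.
Qed.

Lemma fine_partition_chain g f G n x (c : nat -> R) (eta : R) :
  (forall i, (0 < i <= n)%N -> exists m y u,
     [/\ tagged_partition (x i.-1) (x i) m y u, Defs.fine g m y u &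
         `|increment_sum f G m y u - c i| <= eta]) ->
  exists m y u,
     [/\ tagged_partition (x 0%N) (x n) m y u, Defs.fine g m y u &
         `|increment_sum f G m y u - \sum_(1 <= i < n.+1) c i| <= n%:R * eta].
Proof.
elim: n => [|n IH] pieces.
  exists 0%N, (fun=> x 0%N), (fun=> x 0%N); split.
  - exact: tagged_partition_nil.
  - exact: fine_nil.
  - by rewrite increment_sum_nil big_geq // subrr normr0 mul0r.
have [|m [y [u [tp fy ey]]]] := IH.
  by move=> i /andP[i0 iN]; apply: pieces; lia.
have [|m' [y' [u' [tp' fy' ey']]]] := pieces n.+1; first by rewrite /= ltnSn.
have yy' : y m = y' 0%N by rewrite tp.2.1 tp'.1.
exists (m + m')%N, (concat_at m y y'), (concat_at m u u'); split.
- exact: tagged_partition_cat tp tp'.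
- exact: fine_cat.
- rewrite increment_sum_cat // big_nat_recr //= opprD addrACA -natr1 mulrDl mul1r.
  exact: le_trans (ler_normD _ _) (lerD ey ey').
Qed.

Lemma is_integral_on_cauchy a b f G : cousin_on a b ->
  (forall e : R, 0 < e -> exists g c, gauge g /\ forall n x t,
     tagged_partition a b n x t -> Defs.fine g n x t ->
     `|riemann_sum a f G n x t - c| < e) ->
  integrable_on a b f G.
Proof.
move=> cab cauchy.
pose close g c e := gauge g /\ forall n x t, tagged_partition a b n x t ->
  Defs.fine g n x t -> `|riemann_sum a f G n x t - c| < e.
have close_le g c e g' c' e' : close g c e -> close g' c' e' -> c - e <= c' + e'.
  move=> [gg hg] [gg' hg'].
  have [n [x [t [tp fx]]]] := cab _ (gaugeI gg gg').
  have [f1 f2] := fineI fx.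
  move: (hg _ _ _ tp f1) (hg' _ _ _ tp f2); rewrite !ltr_distl.
  by move=> /andP[? ?] /andP[? ?]; lra.
(* every lower estimate c - e is below every upper estimate c' + e', so the
   supremum of the lower estimates is the integral *)
pose V := [set v | exists g c e, close g c e /\ v = c - e].
have [g1 [c1 close1]] := cauchy 1 ltr01.
have V0 : V !=set0 by exists (c1 - 1), g1, c1, 1.
have ubV : has_ubound V.
  by exists (c1 + 1) => _ [g [c [e [ce ->]]]]; exact: close_le ce close1.
exists (sup V) => e e0; have e20 : 0 < e / 2 by rewrite divr_gt0.
have [g [c close_c]] := cauchy _ e20.
exists g; split=> [|n x t tp fx]; first exact: close_c.1.
have supV_le : sup V <= c + e / 2.
  by apply: ge_sup => // _ [g' [c' [e' [ce ->]]]]; exact: close_le ce close_c.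
have supV_ge : c - e / 2 <= sup V by apply: ub_le_sup => //; exists g, c, (e / 2).
move: (close_c.2 _ _ _ tp fx); rewrite !ltr_distl => /andP[? ?].
by apply/andP; split; lra.
Qed.

Lemma is_integral_on_not_cousin a b f G A : ~ cousin_on a b ->
  is_integral_on a b f G A.
Proof.
move=> /existsNP [g /not_implyP [gg nofine]] e _; exists g; split=> // n x t tp fx.
by case: nofine; exists n, x, t.
Qed.

Definition riemann_close a b f1 G1 f2 G2 : Prop :=
  forall e : R, 0 < e -> exists g, gauge g /\ forall n x t,
    tagged_partition a b n x t -> Defs.fine g n x t ->
    `|riemann_sum a f1 G1 n x t - riemann_sum a f2 G2 n x t| < e.

Lemma riemann_close_sym a b f1 G1 f2 G2 :
  riemann_close a b f1 G1 f2 G2 -> riemann_close a b f2 G2 f1 G1.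
Proof.
move=> close e /close [g [gg hg]]; exists g; split=> // n x t tp fx.
by rewrite distrC; exact: hg.
Qed.

Lemma is_integral_on_close a b f1 G1 f2 G2 A : riemann_close a b f1 G1 f2 G2 ->
  is_integral_on a b f1 G1 A -> is_integral_on a b f2 G2 A.
Proof.
move=> close intA e e0; have e20 : 0 < e / 2 by rewrite divr_gt0.
have [g1 [gg1 h1]] := intA _ e20; have [g2 [gg2 h2]] := close _ e20.
exists (fun w => (g1 w `&` g2 w)%O); split=> [|n x t tp /fineI [f1x f2x]].
  exact: gaugeI.
move: (h1 _ _ _ tp f1x) (h2 _ _ _ tp f2x); rewrite !ltr_distl.
by move=> /andP[? ?] /andP[? ?]; apply/andP; split; lra.
Qed.

Lemma integral_on_ext a b f1 G1 f2 G2 :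
  (forall A, is_integral_on a b f1 G1 A <-> is_integral_on a b f2 G2 A) ->
  (integrable_on a b f1 G1 <-> integrable_on a b f2 G2) /\
  integral_on a b f1 G1 = integral_on a b f2 G2.
Proof.
move=> same; split; first by split=> -[A /same]; exists A.
by rewrite /integral_on; congr xget; apply/seteqP; split=> A /same.
Qed.

End RiemannSums.

Section Indefinite.
Context {d : Order.disp_t} {K : orderTopologicalType d} {R : realType}.
Variables (zK oK : K).
Hypotheses (hzK : forall y : K, (zK <= y)%O) (hoK : forall y : K, (y <= oK)%O).
Hypothesis cousin : forall a b : K, (a <= b)%O -> cousin_on a b.
Variables (h T : K -> R).
Hypothesis hint : integrable_on zK oK h T.

Let H x := integral_on zK x h T.

Lemma is_integral_on_prefix b : is_integral_on zK b h T (H b).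
Proof.
apply: xgetPex; have [A intA] := hint.
apply: is_integral_on_cauchy (cousin (hzK b)) _ => e e0.
have [g [gg hg]] := intA e e0.
have [m [y [u [tq fq]]]] := cousin (hoK b) gg.
exists g, (A - increment_sum h T m y u); split=> // n x t tp fx.
have xy : x n = y 0%N by rewrite tp.2.1 tq.1.
have := hg _ _ _ (tagged_partition_cat tp tq) (fine_cat xy fx fq).
by rewrite !riemann_sumE increment_sum_cat // opprB !addrA.
Qed.

Lemma integral_on_refl : H zK = h zK * T zK.
Proof.
apply/eqP; rewrite -subr_eq0 -normr_le0; apply/ler_addgt0Pr => e e0.
have [g [gg hg]] := is_integral_on_prefix zK e0.
have fx : Defs.fine g 0 (fun=> zK) (fun=> zK) by exact: fine_nil.
have := hg 0%N _ _ (tagged_partition_nil zK) fx.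
by rewrite riemann_sumE increment_sum_nil addr0 add0r distrC => /ltW.
Qed.

Lemma increment_sum_approx p q g eta : (p <= q)%O -> gauge g -> 0 < eta ->
  exists m y u, [/\ tagged_partition p q m y u, Defs.fine g m y u &
    `|increment_sum h T m y u - (H q - H p)| < eta].
Proof.
move=> pq gg eta0; have eta20 : 0 < eta / 2 by rewrite divr_gt0.
have [gp [ggp hp]] := is_integral_on_prefix p eta20.
have [gq [ggq hq]] := is_integral_on_prefix q eta20.
have gg' : gauge (fun w => (g w `&` (gp w `&` gq w))%O).
  by apply: gaugeI => //; exact: gaugeI.
have [n [x [t [tp fx]]]] := cousin (hzK p) gg'.
have [m [y [u [tq fy]]]] := cousin pq gg'.
have xy : x n = y 0%N by rewrite tp.2.1 tq.1.
have /fineI [_ /fineI [_ fcat]] := fine_cat xy fx fy.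
have /fineI [_ /fineI [fxp _]] := fx.
have /fineI [fyg _] := fy.
exists m, y, u; split=> //.
move: (hp _ _ _ tp fxp) (hq _ _ _ (tagged_partition_cat tp tq) fcat).
rewrite !riemann_sumE increment_sum_cat // !ltr_distl => /andP[? ?] /andP[? ?].
by apply/andP; split; lra.
Qed.

Definition defect x t i : R :=
  h (t i) * (T (x i) - T (x i.-1)) - (H (x i) - H (x i.-1)).

Lemma saks_henstock e : 0 < e -> exists g, gauge g /\ forall n x t,
  tagged_partition zK oK n x t -> Defs.fine g n x t ->
  forall S : pred nat, `|\sum_(1 <= i < n.+1 | S i) defect x t i| <= e.
Proof.
move=> e0; have e20 : 0 < e / 2 by rewrite divr_gt0.
have [g [gg hg]] := is_integral_on_prefix oK e20.
exists g; split=> // n x t tp fx S; have [x0 [xn hx]] := tp.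
have n1 : 0 < n%:R + 1 :> R by rewrite ltr_pwDr // ler0n.
pose eta := e / 2 / (n%:R + 1).
have eta0 : 0 < eta by rewrite divr_gt0.
have n_eta : n%:R * eta <= e / 2.
  have -> : e / 2 = eta * (n%:R + 1) by rewrite divfK // gt_eqF.
  by rewrite mulrC; apply: ler_wpM2l; [exact: ltW | rewrite lerDl].
pose c i := if S i then h (t i) * (T (x i) - T (x i.-1)) else H (x i) - H (x i.-1).
have pieces i : (0 < i <= n)%N -> exists m y u,
    [/\ tagged_partition (x i.-1) (x i) m y u, Defs.fine g m y u &
        `|increment_sum h T m y u - c i| <= eta].
  move=> ni; have [xx [xt tx]] := hx i ni; rewrite /c; case: (S i).
    exists 1%N, (single (x i.-1) (x i)), (fun=> t i); split.
    - exact: tagged_partition_single.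
    - by apply: fine_single; exact: fx.
    - by rewrite increment_sum_single subrr normr0 ltW.
  have [m [y [u [? ? /ltW ?]]]] := increment_sum_approx xx gg eta0.
  by exists m, y, u.
have [m [y [u [tq fq close_c]]]] := fine_partition_chain pieces.
rewrite x0 xn in tq.
have tele : \sum_(1 <= i < n.+1) (H (x i) - H (x i.-1)) = H (x n) - H (x 0%N).
  exact: (telescope_sumr_eq (fun k => H (x k.-1))).
have -> : \sum_(1 <= i < n.+1 | S i) defect x t i =
    \sum_(1 <= i < n.+1) c i - (H oK - h zK * T zK).
  rewrite -integral_on_refl -xn -x0 -tele big_mkcond -sumrB.
  by apply: eq_bigr => i _; rewrite /c /defect; case: (S i); rewrite ?subrr.
have := hg _ _ _ tq fq; rewrite riemann_sumE.
move: close_c; rewrite ler_distl ltr_distl ler_norml => /andP[? ?] /andP[? ?].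
by apply/andP; split; lra.
Qed.

Lemma saks_henstock_norm e : 0 < e -> exists g, gauge g /\ forall n x t,
  tagged_partition zK oK n x t -> Defs.fine g n x t ->
  \sum_(1 <= i < n.+1) `|defect x t i| <= e.
Proof.
move=> e0; have e20 : 0 < e / 2 by rewrite divr_gt0.
have [g [gg hg]] := saks_henstock e20.
exists g; split=> // n x t tp fx.
rewrite (bigID (fun i => 0 <= defect x t i)) /=.
have -> : \sum_(1 <= i < n.+1 | 0 <= defect x t i) `|defect x t i| =
    \sum_(1 <= i < n.+1 | 0 <= defect x t i) defect x t i.
  by apply: eq_bigr => i /ger0_norm.
have -> : \sum_(1 <= i < n.+1 | ~~ (0 <= defect x t i)) `|defect x t i| =
    - \sum_(1 <= i < n.+1 | ~~ (0 <= defect x t i)) defect x t i.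
  by rewrite -sumrN; apply: eq_bigr => i; rewrite -ltNge => /ltr0_norm.
move: (hg _ _ _ tp fx (fun i => 0 <= defect x t i)).
move: (hg _ _ _ tp fx (fun i => ~~ (0 <= defect x t i))).
by rewrite !ler_norml => /andP[? ?] /andP[? ?]; lra.
Qed.

Lemma riemann_sum_diff f n x t :
  riemann_sum zK (fun y => f y * h y) T n x t - riemann_sum zK f H n x t =
  \sum_(1 <= i < n.+1) f (t i) * defect x t i.
Proof.
rewrite !riemann_sumE integral_on_refl mulrA opprD addrACA subrr add0r -sumrB.
by apply: eq_bigr => i _; rewrite /defect [RHS]mulrBr mulrA.
Qed.

Lemma riemann_close_indefinite f M : (forall y, `|f y| <= M) ->
  riemann_close zK oK (fun y => f y * h y) T f H.
Proof.
move=> fM eps eps0; have M0 : 0 <= M := le_trans (normr_ge0 _) (fM zK).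
have M1 : 0 < M + 1 by lra.
set e := eps / (M + 1); have e0 : 0 < e by rewrite divr_gt0.
have eM : e * (M + 1) = eps by rewrite divfK // gt_eqF.
have [g [gg hg]] := saks_henstock_norm e0.
exists g; split=> // n x t tp fx; rewrite riemann_sum_diff.
have sum_le : \sum_(1 <= i < n.+1) `|f (t i) * defect x t i| <= M * e.
  apply: le_trans (ler_wpM2l M0 (hg _ _ _ tp fx)); rewrite mulr_sumr.
  by apply: ler_sum => i _; rewrite normrM; apply: ler_wpM2r.
apply: le_lt_trans (ler_norm_sum _ _ _) (le_lt_trans sum_le _).
nra.
Qed.

Lemma is_integral_on_indefinite f M : (forall y, `|f y| <= M) ->
  forall A, is_integral_on zK oK f H A <->
            is_integral_on zK oK (fun y => f y * h y) T A.
Proof.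
move=> /riemann_close_indefinite close A.
by split; apply: is_integral_on_close; [exact: riemann_close_sym | exact: close].
Qed.

End Indefinite.

Unset Implicit Arguments. Set Strict Implicit.

Theorem lemma6p8 (R : realType) (d : Order.disp_t) (K : orderTopologicalType d)
  (zK oK : K)
  (hcompact : compact [set: K])
  (hzK : forall y : K, (zK <= y)%O) (hoK : forall y : K, (y <= oK)%O)
  (hzo : (zK < oK)%O)
  (T h f : K -> R)
  (Tmono : forall x y : K, (x <= y)%O -> T x <= T y)
  (Tright : forall x : K,
     (T @ within [set y : K | (x <= y)%O] (nbhs x)) --> T x)
  (hint : integrable_on zK oK h T)
  (fbd : exists M : R, forall x : K, `|f x| <= M) :
  let H := fun x : K => integral_on zK x h T in
  (integrable_on zK oK f H <-> integrable_on zK oK (fun x => f x * h x) T) /\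
  (integrable_on zK oK f H ->
     integral_on zK oK f H = integral_on zK oK (fun x => f x * h x) T).
Proof.
move=> H; have [M fM] := fbd.
suff /integral_on_ext [-> ->] : forall A, is_integral_on zK oK f H A <->
    is_integral_on zK oK (fun x => f x * h x) T A by [].
have [dense|] := pselect (forall u v : K, (u < v)%O -> exists w, (u < w < v)%O).
  by have := is_integral_on_indefinite hzK hoK
    (@dense_compact_cousin _ _ hcompact dense) hint fM.
move=> /existsNP [u /existsNP [v /not_implyP [uv /forallNP gap]]] A.
have ncousin := gap_not_cousin (hzK u) (hoK v) uv gap.
by split=> _; exact: is_integral_on_not_cousin.
Qed.
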